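(* Let $G$ be a graph satisfying the triangle condition at every vertex. Then $G$ is an swm-graph if and only if for every pair of vertices $p,q$ the interval $I(p,q)$, endowed with the base-point order $\preceq_p$, is a modular lattice, and the subgraph of $G$ induced by $I(p,q)$ is the covering graph of this lattice and is an isometric subgraph of $G$.
   Context: Graphs are simple, undirected, connected, possibly infinite; $d$ is graph distance, $I(p,q)=\{x:d(p,x)+d(x,q)=d(p,q)\}$. Triangle condition at $u$: for any $v,w$ with $1=d(v,w)<d(u,v)=d(u,w)$ there is a common neighbor $x$ of $v,w$ with $d(u,x)=d(u,v)-1$. Quadrangle condition at $u$: for $v,w,z$ with $d(v,z)=d(w,z)=1$, $2=d(v,w)\le d(u,v)=d(u,w)=d(u,z)-1$ there is a common neighbor $x$ of $v,w$ with $d(u,x)=d(u,v)-1$. Weakly modular: both conditions hold at every vertex. An swm-graph is a weakly modular graph containing no induced $K_4^-$ and no isometric $K_{3,3}^-$ ($K_4$, resp. $K_{3,3}$, minus one edge). The base-point order on $I(p,q)$ is $x\preceq_p y$ iff $x\in I(p,y)$. A lattice is modular if $x\vee(y\wedge z)=(x\vee y)\wedge z$ whenever $x\preceq z$. The covering graph of a poset has an edge between $x,y$ iff one covers the other. *)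

From Stdlib Require Import Arith Lia ClassicalEpsilon.

Set Implicit Arguments.

Section Graphs.
Variable V : Type.
Variable adj : V -> V -> Prop.

Inductive walk : nat -> V -> V -> Prop :=
| walk0 x : walk 0 x x
| walkS n x y z : adj x y -> walk n y z -> walk (S n) x z.

Definition is_dist (x y : V) (n : nat) : Prop :=
  walk n x y /\ forall m, walk m x y -> n <= m.

Definition simple_connected_graph : Prop :=
  (forall x y, adj x y -> adj y x) /\
  (forall x, ~ adj x x) /\
  (forall x y, exists n, walk n x y).

(* the graph distance d (meaningful for connected graphs) *)
Definition dist (x y : V) : nat := epsilon (inhabits 0) (fun n => is_dist x y n).

Definition interval (p q x : V) : Prop := dist p x + dist x q = dist p q.

Definition bp_le (p x y : V) : Prop := interval p y x.

Definition triangle_cond (u : V) : Prop :=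
  forall v w, adj v w -> dist u v = dist u w -> 1 < dist u v ->
    exists x, adj x v /\ adj x w /\ dist u x = dist u v - 1.

Definition quadrangle_cond (u : V) : Prop :=
  forall v w z, adj v z -> adj w z -> dist v w = 2 ->
    2 <= dist u v -> dist u v = dist u w -> dist u z = dist u v + 1 ->
    exists x, adj x v /\ adj x w /\ dist u x = dist u v - 1.

Definition weakly_modular : Prop :=
  forall u, triangle_cond u /\ quadrangle_cond u.

Definition has_induced_K4minus : Prop :=
  exists a b c d, a <> b /\ a <> c /\ a <> d /\ b <> c /\ b <> d /\ c <> d /\
    adj a b /\ adj a c /\ adj a d /\ adj b c /\ adj b d /\ ~ adj c d.

(* isometric K33^- : parts {a1,a2,a3}, {b1,b2,b3}, all edges ai-bj except a3-b3;
   isometric means G-distances equal the distances in K33^-. *)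
Definition has_isometric_K33minus : Prop :=
  exists a1 a2 a3 b1 b2 b3,
    dist a1 a2 = 2 /\ dist a1 a3 = 2 /\ dist a2 a3 = 2 /\
    dist b1 b2 = 2 /\ dist b1 b3 = 2 /\ dist b2 b3 = 2 /\
    dist a1 b1 = 1 /\ dist a1 b2 = 1 /\ dist a1 b3 = 1 /\
    dist a2 b1 = 1 /\ dist a2 b2 = 1 /\ dist a2 b3 = 1 /\
    dist a3 b1 = 1 /\ dist a3 b2 = 1 /\ dist a3 b3 = 3.

Definition swm_graph : Prop :=
  weakly_modular /\ ~ has_induced_K4minus /\ ~ has_isometric_K33minus.
End Graphs.

Section Lattices.
Variable V : Type.
Variables (S : V -> Prop) (le : V -> V -> Prop).

Definition is_poset : Prop :=
  (forall x, S x -> le x x) /\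
  (forall x y, S x -> S y -> le x y -> le y x -> x = y) /\
  (forall x y z, S x -> S y -> S z -> le x y -> le y z -> le x z).

Definition is_join (x y j : V) : Prop :=
  S j /\ le x j /\ le y j /\ forall u, S u -> le x u -> le y u -> le j u.

Definition is_meet (x y m : V) : Prop :=
  S m /\ le m x /\ le m y /\ forall u, S u -> le u x -> le u y -> le u m.

Definition is_lattice : Prop :=
  is_poset /\
  forall x y, S x -> S y -> (exists j, is_join x y j) /\ (exists m, is_meet x y m).

(* x \/ (y /\ z) = (x \/ y) /\ z whenever x <= z *)
Definition is_modular_lattice : Prop :=
  is_lattice /\
  forall x y z, S x -> S y -> S z -> le x z ->
    forall a b c e, is_meet y z a -> is_join x a b -> is_join x y c -> is_meet c z e ->
      b = e.

Definition covers (x y : V) : Prop :=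
  S x /\ S y /\ le x y /\ x <> y /\
  forall z, S z -> le x z -> le z y -> z = x \/ z = y.
End Lattices.

Definition induced (V : Type) (adj : V -> V -> Prop) (S : V -> Prop) : V -> V -> Prop :=
  fun x y => S x /\ S y /\ adj x y.

Definition is_covering_graph_on (V : Type) (adj : V -> V -> Prop) (S : V -> Prop)
  (le : V -> V -> Prop) : Prop :=
  forall x y, S x -> S y -> (adj x y <-> covers S le x y \/ covers S le y x).

Definition isometric_on (V : Type) (adj : V -> V -> Prop) (S : V -> Prop) : Prop :=
  forall x y, S x -> S y -> is_dist (induced adj S) x y (dist adj x y).

From Stdlib Require Import Arith Lia Classical ClassicalEpsilon.

(* In an swm-graph, fix p and q and order I(p,q) by ≼p, with rank d(p,-). Inside an interval
   no edge joins two vertices of equal rank (else a K4^-); hence the quadrangle condition makes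
   two lower covers of a vertex share a lower cover, unique by the absence of K33^-, and two
   upper covers below q share a least upper cover. Inducting on ranks, joins exist with
   d(p,x∨y) + d(p,x∧y) <= d(p,x) + d(p,y), dually meets exist with the reverse inequality, so the
   rank is modular and the interval is a modular lattice whose covering graph is the induced one.
   For isometry it suffices that d(x,y) = d(p,x) + d(p,y) when x ∧ y = p, which follows by
   induction on d(p,q), the triangle condition and modularity of the ranks of smaller intervals
   ruling out shortcuts of length d(p,x) + d(p,y) - 1 or - 2.
   Conversely, the edge between the two vertices of degree 3 of a K4^- is not a covering edge
   of the interval between the other two, a K33^- makes I(a3,b3) fail to be a lattice, and the
   quadrangle condition at u for v, w below z is witnessed by the meet of v and w in I(u,z). *)

Lemma nat_least_witness (P : nat -> Prop) :
  (exists n, P n) -> exists n, P n /\ forall m, P m -> n <= m.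
Proof.
  intros HP.
  destruct (dec_inh_nat_subset_has_unique_least_element P (fun n => classic (P n)) HP)
    as [n [[Pn Hn] _]].
  eauto.
Qed.

Lemma nat_bounded_greatest_witness (P : nat -> Prop) (B : nat) :
  (exists n, P n) -> (forall n, P n -> n <= B) -> exists n, P n /\ forall m, P m -> m <= n.
Proof.
  intros [n Pn] HB.
  destruct (nat_least_witness (fun k => P (B - k))) as [k [Pk Hk]].
  { exists (B - n). replace (B - (B - n)) with n by (specialize (HB n Pn); lia). exact Pn. }
  exists (B - k). split; [exact Pk|].
  intros m Pm. specialize (HB m Pm).
  assert (k <= B - m) by (apply Hk; replace (B - (B - m)) with m by lia; exact Pm).
  lia.
Qed.

Lemma walk_app {V : Type} (R : V -> V -> Prop) n m x y z :
  walk R n x y -> walk R m y z -> walk R (n + m) x z.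
Proof. induction 1; intros; simpl; auto. econstructor; eauto. Qed.

Lemma walk_rev {V : Type} {R : V -> V -> Prop} :
  (forall a b, R a b -> R b a) -> forall n x y, walk R n x y -> walk R n y x.
Proof.
  intros Rsym n x y W. induction W; [constructor|].
  rewrite <- Nat.add_1_r. apply walk_app with y; auto.
  econstructor; eauto. constructor.
Qed.

Lemma walk_mono {V : Type} (R1 R2 : V -> V -> Prop) n x y :
  (forall a b, R1 a b -> R2 a b) -> walk R1 n x y -> walk R2 n x y.
Proof. intros H W; induction W; econstructor; eauto. Qed.

Section Graph.
Variables (V : Type) (adj : V -> V -> Prop).
Hypothesis adj_sym : forall x y, adj x y -> adj y x.
Hypothesis adj_irrefl : forall x, ~ adj x x.
Hypothesis connected : forall x y, exists n, walk adj n x y.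

Local Notation d := (dist adj).
Local Notation "x ≼[ p ] y" := (bp_le adj p x y) (at level 70, format "x  ≼[ p ]  y").
Local Notation join_in p q := (is_join (interval adj p q) (bp_le adj p)).
Local Notation meet_in p q := (is_meet (interval adj p q) (bp_le adj p)).
Local Ltac unfold_bp := unfold bp_le, interval in *.

Lemma dist_spec x y : is_dist adj x y (d x y).
Proof.
  unfold dist. apply epsilon_spec.
  destruct (nat_least_witness (fun n => walk adj n x y) (connected x y)) as [n Hn].
  exists n; exact Hn.
Qed.

Lemma dist_walk x y : walk adj (d x y) x y.
Proof. apply dist_spec. Qed.

Lemma dist_le_walk n x y : walk adj n x y -> d x y <= n.
Proof. apply dist_spec. Qed.

Lemma dist_refl x : d x x = 0.
Proof. pose proof (dist_le_walk 0 x x (walk0 adj x)); lia. Qed.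

Lemma dist_eq0 x y : d x y = 0 -> x = y.
Proof. intros H. pose proof (dist_walk x y) as W. rewrite H in W. now inversion W. Qed.

Lemma neq_of_dist_neq p x y : d p x <> d p y -> x <> y.
Proof. intros H E; subst; auto. Qed.

Lemma dist_sym x y : d x y = d y x.
Proof.
  pose proof (dist_le_walk _ _ _ (walk_rev adj_sym _ _ _ (dist_walk x y))).
  pose proof (dist_le_walk _ _ _ (walk_rev adj_sym _ _ _ (dist_walk y x))). lia.
Qed.

Lemma dist_triangle x y z : d x z <= d x y + d y z.
Proof. apply dist_le_walk. apply walk_app with y; apply dist_walk. Qed.

Lemma dist_adj x y : adj x y -> d x y = 1.
Proof.
  intros H. assert (d x y <= 1) by (apply dist_le_walk; econstructor; eauto; constructor).
  destruct (d x y) eqn:E; [|lia].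
  apply dist_eq0 in E; subst. exfalso; eapply adj_irrefl; eauto.
Qed.

Lemma adj_dist1 x y : d x y = 1 -> adj x y.
Proof.
  intros H. pose proof (dist_walk x y) as W. rewrite H in W.
  inversion W as [|n a b c Hab Hw]; subst. inversion Hw; subst; auto.
Qed.

Lemma dist_succ_step x y n : d x y = S n -> exists z, adj x z /\ d z y = n.
Proof.
  intros H. pose proof (dist_walk x y) as W. rewrite H in W.
  inversion W as [|m a b c Hab Hw]; subst. exists b; split; auto.
  pose proof (dist_le_walk _ _ _ Hw). pose proof (dist_triangle x b y).
  rewrite (dist_adj _ _ Hab) in *. lia.
Qed.

Lemma dist_adj_le u x y : adj x y -> d u x <= S (d u y).
Proof.
  intros H. pose proof (dist_triangle u y x). rewrite (dist_adj y x (adj_sym _ _ H)) in *. lia.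
Qed.

Lemma bp_le_refl p x : x ≼[p] x.
Proof. unfold_bp; rewrite dist_refl; lia. Qed.

Lemma bp_le_base p x : p ≼[p] x.
Proof. unfold_bp; rewrite dist_refl; lia. Qed.

Lemma bp_le_dist p x y : x ≼[p] y -> d x y = d p y - d p x.
Proof. unfold_bp; lia. Qed.

Lemma bp_le_rank p x y : x ≼[p] y -> d p x <= d p y.
Proof. unfold_bp; lia. Qed.

Lemma bp_le_rank_eq p x y : x ≼[p] y -> d p x = d p y -> x = y.
Proof. unfold_bp; intros; apply dist_eq0; lia. Qed.

Lemma bp_le_rank_lt p x y : x ≼[p] y -> x <> y -> d p x < d p y.
Proof.
  intros H N. pose proof (bp_le_rank _ _ _ H).
  destruct (Nat.eq_dec (d p x) (d p y)); [|lia].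
  exfalso; apply N; eapply bp_le_rank_eq; eauto.
Qed.

Lemma bp_le_antisym p x y : x ≼[p] y -> y ≼[p] x -> x = y.
Proof.
  intros H1 H2. apply (bp_le_rank_eq p); auto.
  apply bp_le_rank in H1; apply bp_le_rank in H2; lia.
Qed.

Lemma bp_le_trans p x y z : x ≼[p] y -> y ≼[p] z -> x ≼[p] z.
Proof. unfold_bp; intros. pose proof (dist_triangle p x z). pose proof (dist_triangle x y z). lia. Qed.

Lemma bp_le_geodesic p u w v : u ≼[p] v -> d u w + d w v = d u v -> u ≼[p] w /\ w ≼[p] v.
Proof.
  unfold_bp; intros. pose proof (dist_triangle p u w). pose proof (dist_triangle p w v). lia.
Qed.

Lemma bp_le_step_up p x y : x ≼[p] y -> x <> y ->
  exists w, adj x w /\ x ≼[p] w /\ w ≼[p] y /\ d p w = S (d p x).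
Proof.
  intros H N. destruct (d x y) eqn:E; [exfalso; apply N, dist_eq0; auto|].
  destruct (dist_succ_step _ _ _ E) as [w [Aw Dw]].
  assert (B : d x w + d w y = d x y) by (rewrite (dist_adj _ _ Aw); lia).
  destruct (bp_le_geodesic p x w y H B) as [H1 H2]. exists w; repeat split; auto.
  unfold_bp; rewrite (dist_adj _ _ Aw) in H1; lia.
Qed.

Lemma bp_le_step_down p x y : x ≼[p] y -> x <> y ->
  exists w, adj w y /\ x ≼[p] w /\ w ≼[p] y /\ d p y = S (d p w).
Proof.
  intros H N. destruct (d y x) eqn:E; [exfalso; apply N, eq_sym, dist_eq0; auto|].
  destruct (dist_succ_step _ _ _ E) as [w [Aw Dw]].
  assert (B : d x w + d w y = d x y).
  { rewrite (dist_sym x w), (dist_sym x y), (dist_sym w y), (dist_adj _ _ Aw); lia. }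
  destruct (bp_le_geodesic p x w y H B) as [H1 H2]. exists w; repeat split; auto.
  unfold_bp; rewrite (dist_sym w y), (dist_adj _ _ Aw) in H2; lia.
Qed.

Lemma bp_le_rebase p m c x : m ≼[p] x -> c ≼[m] x -> m ≼[p] c /\ c ≼[p] x.
Proof. unfold_bp; intros. pose proof (dist_triangle p m c). pose proof (dist_triangle p c x). lia. Qed.

Lemma bp_le_rebase_interval p m x q : m ≼[p] x -> x ≼[p] q -> x ≼[m] q.
Proof.
  unfold_bp; intros.
  pose proof (dist_triangle m x q). pose proof (dist_triangle p m q). pose proof (dist_triangle p x q).
  lia.
Qed.

Lemma geodesic_walk_in_interval p q : forall n u v, d u v = n -> u ≼[p] v -> v ≼[p] q ->
  walk (induced adj (interval adj p q)) n u v.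
Proof.
  induction n; intros u v E Huv Hvq.
  - apply dist_eq0 in E; subst; constructor.
  - destruct (dist_succ_step _ _ _ E) as [w [Aw Dw]].
    assert (B : d u w + d w v = d u v) by (rewrite (dist_adj _ _ Aw); lia).
    destruct (bp_le_geodesic p u w v Huv B) as [H1 H2].
    apply walkS with w; [|apply IHn; auto].
    split; [|split]; auto.
    + exact (bp_le_trans _ _ _ _ Huv Hvq).
    + exact (bp_le_trans _ _ _ _ H2 Hvq).
Qed.

Section SwmIntervals.
Hypothesis triangle : forall u, triangle_cond adj u.
Hypothesis quadrangle : forall u, quadrangle_cond adj u.
Hypothesis no_K4minus : ~ has_induced_K4minus adj.
Hypothesis no_K33minus : ~ has_isometric_K33minus adj.

(* The triangle condition, extended to the case d(u,x) = 1 where u itself is the common neighbour. *)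
Lemma edge_common_lower_neighbour u x y : adj x y -> d u x = d u y ->
  exists t, adj t x /\ adj t y /\ S (d u t) = d u x.
Proof.
  intros A E.
  destruct (d u x) as [|[|k]] eqn:Ex.
  - exfalso. apply dist_eq0 in Ex. assert (Ey : d u y = 0) by lia. apply dist_eq0 in Ey.
    subst. eapply adj_irrefl; eauto.
  - exists u. rewrite dist_refl. repeat split; auto; apply adj_dist1; lia.
  - destruct (triangle u x y A) as [t [H1 [H2 H3]]]; [lia|lia|].
    exists t; repeat split; auto; lia.
Qed.

(* Otherwise x, y, their common neighbours towards p and towards u would span a K4^-. *)
Lemma edge_below_rank_neq p u x y : x ≼[p] u -> y ≼[p] u -> adj x y -> d p x <> d p y.
Proof.
  intros Hx Hy A E.
  destruct (edge_common_lower_neighbour p x y A E) as [t [Tx [Ty Tr]]].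
  assert (Eu : d u x = d u y) by (rewrite (dist_sym u x), (dist_sym u y); unfold_bp; lia).
  destruct (edge_common_lower_neighbour u x y A Eu) as [s [Sx [Sy Sr]]].
  assert (Rs : d p s >= S (d p x)).
  { pose proof (dist_triangle p s u). rewrite (dist_sym u x), (dist_sym u s) in Sr. unfold_bp; lia. }
  assert (Nxy : x <> y) by (intro; subst; eapply adj_irrefl; eauto).
  apply no_K4minus. exists x, y, t, s.
  repeat split; auto; try (apply neq_of_dist_neq with p; lia).
  intro At. pose proof (dist_adj_le p _ _ (adj_sym _ _ At)). lia.
Qed.

Definition bp_cover p a x := a ≼[p] x /\ d p x = S (d p a).

Lemma bp_cover_dist p a x : bp_cover p a x -> d a x = 1.
Proof. intros [H1 H2]. unfold_bp. lia. Qed.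

Lemma lower_covers_dist p a b x : bp_cover p a x -> bp_cover p b x -> a <> b -> d a b = 2.
Proof.
  intros Ha Hb N.
  assert (d a b <= 2).
  { pose proof (dist_triangle a x b).
    rewrite (bp_cover_dist _ _ _ Ha), (dist_sym x b), (bp_cover_dist _ _ _ Hb) in *. lia. }
  destruct (d a b) as [|[|[|k]]] eqn:E; try lia.
  - exfalso; apply N, dist_eq0; auto.
  - exfalso. apply (edge_below_rank_neq p x a b); [apply Ha|apply Hb|apply adj_dist1; auto|].
    destruct Ha, Hb; lia.
Qed.

Lemma lower_covers_common_lower_cover p a b x : bp_cover p a x -> bp_cover p b x -> a <> b ->
  exists c, bp_cover p c a /\ bp_cover p c b.
Proof.
  intros Ha Hb N. pose proof (lower_covers_dist _ _ _ _ Ha Hb N) as D2.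
  assert (Eab : d p a = d p b) by (destruct Ha, Hb; lia).
  destruct (d p a) as [|[|k]] eqn:Ea.
  - exfalso. apply N. apply dist_eq0 in Ea. assert (Eb : d p b = 0) by lia.
    apply dist_eq0 in Eb. congruence.
  - exists p. unfold bp_cover. rewrite dist_refl. repeat split; try apply bp_le_base; lia.
  - destruct (quadrangle p a b x) as [c [H1 [H2 H3]]];
      try (apply adj_dist1, (bp_cover_dist p); auto); try (destruct Ha; lia); auto.
    exists c. unfold bp_cover; unfold_bp. rewrite (dist_adj _ _ H1), (dist_adj _ _ H2). lia.
Qed.

(* Two distinct common lower covers c, c' of a and b, together with a common lower cover of
   c and c', would span an isometric K33^- with x. *)
Lemma common_lower_cover_unique p a b x c c' : bp_cover p a x -> bp_cover p b x -> a <> b ->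
  bp_cover p c a -> bp_cover p c b -> bp_cover p c' a -> bp_cover p c' b -> c = c'.
Proof.
  intros Ha Hb N Hca Hcb Hc'a Hc'b.
  apply NNPP; intro Ncc.
  destruct (lower_covers_common_lower_cover p c c' a Hca Hc'a Ncc) as [e [Hec Hec']].
  pose proof (lower_covers_dist _ _ _ _ Hca Hc'a Ncc) as Dcc.
  pose proof (lower_covers_dist _ _ _ _ Ha Hb N) as Dab.
  destruct Ha as [Ha1 Ha2], Hb as [Hb1 Hb2], Hca as [Hca1 Hca2], Hcb as [Hcb1 Hcb2],
    Hc'a as [Hc'a1 Hc'a2], Hc'b as [Hc'b1 Hc'b2], Hec as [Hec1 Hec2], Hec' as [Hec'1 Hec'2].
  pose proof (bp_le_trans p c a x Hca1 Ha1) as Hcx.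
  pose proof (bp_le_trans p c' a x Hc'a1 Ha1) as Hc'x.
  pose proof (bp_le_trans p e c a Hec1 Hca1) as Hea.
  pose proof (bp_le_trans p e c b Hec1 Hcb1) as Heb.
  pose proof (bp_le_trans p e a x Hea Ha1) as Hex.
  apply no_K33minus. exists c, c', x, a, b, e.
  unfold_bp. repeat split; solve [lia | rewrite dist_sym; lia].
Qed.

Lemma upper_covers_common_upper_cover p m x y u : bp_cover p m x -> bp_cover p m y -> x <> y ->
  x ≼[p] u -> y ≼[p] u -> exists z, bp_cover p x z /\ bp_cover p y z /\ z ≼[p] u.
Proof.
  intros Hx Hy N Hxu Hyu.
  assert (Exy : d p x = d p y) by (destruct Hx, Hy; lia).
  assert (D2 : d x y = 2).
  { assert (d x y <= 2).
    { pose proof (dist_triangle x m y).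
      rewrite (dist_sym x m), (bp_cover_dist _ _ _ Hx), (bp_cover_dist _ _ _ Hy) in *. lia. }
    destruct (d x y) as [|[|[|k]]] eqn:E; try lia.
    - exfalso; apply N, dist_eq0; auto.
    - exfalso. apply (edge_below_rank_neq p u x y Hxu Hyu); auto. apply adj_dist1; auto. }
  assert (Eux : d u x = d p u - d p x) by (rewrite dist_sym; apply bp_le_dist; auto).
  assert (Euy : d u y = d p u - d p y) by (rewrite dist_sym; apply bp_le_dist; auto).
  assert (Hmu : m ≼[p] u) by (eapply bp_le_trans; [apply Hx|auto]).
  assert (Eum : d u m = d p u - d p m) by (rewrite dist_sym; apply bp_le_dist; auto).
  pose proof (bp_le_rank _ _ _ Hxu) as Rxu.
  destruct (Nat.eq_dec (d p u) (d p x)) as [E0|E0].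
  { exfalso. apply N. pose proof (bp_le_rank_eq _ _ _ Hxu (eq_sym E0)).
    pose proof (bp_le_rank_eq _ _ _ Hyu ltac:(lia)). congruence. }
  destruct (Nat.eq_dec (d p u) (S (d p x))) as [E1|E1].
  { exists u. unfold bp_cover. repeat split; auto; try apply bp_le_refl; lia. }
  destruct (quadrangle u x y m) as [z [Zx [Zy Zr]]];
    try (apply adj_dist1; rewrite dist_sym; apply (bp_cover_dist p); auto); try (destruct Hx; lia); auto.
  pose proof (dist_adj_le p _ _ Zx). pose proof (dist_triangle p z u).
  exists z. unfold bp_cover; unfold_bp.
  rewrite (dist_sym z u) in *.
  rewrite (dist_adj _ _ (adj_sym _ _ Zx)), (dist_adj _ _ (adj_sym _ _ Zy)).
  repeat split; lia.
Qed.

Lemma upper_covers_join p q m x y : bp_cover p m x -> bp_cover p m y -> x <> y ->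
  x ≼[p] q -> y ≼[p] q -> exists z, d p z = S (d p x) /\ join_in p q x y z.
Proof.
  intros Hx Hy N Hxq Hyq.
  destruct (upper_covers_common_upper_cover p m x y q Hx Hy N Hxq Hyq) as [z [[Hxz Rz] [[Hyz _] Hzq]]].
  exists z. repeat split; auto.
  intros u Huq Hxu Hyu.
  destruct (upper_covers_common_upper_cover p m x y u Hx Hy N Hxu Hyu) as [z' [Cz'x [Cz'y Hz'u]]].
  destruct (classic (z = z')) as [Ez|Nz]; [subst; auto|].
  exfalso. apply N.
  assert (Hz'q : z' ≼[p] q) by (eapply bp_le_trans; eauto).
  destruct (upper_covers_common_upper_cover p x z z' q (conj Hxz Rz) Cz'x Nz Hzq Hz'q)
    as [w [Cw1 [Cw2 _]]].
  assert (Cyz : bp_cover p y z) by (split; auto; destruct Hx, Hy; lia).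
  exact (common_lower_cover_unique p z z' w x y Cw1 Cw2 Nz (conj Hxz Rz) Cz'x Cyz Cz'y).
Qed.

(* Semimodularity of the rank d(p,-): built up one pair of covers at a time. *)
Lemma join_in_rank_le p q m x y : m ≼[p] x -> m ≼[p] y -> x ≼[p] q -> y ≼[p] q ->
  exists j, join_in p q x y j /\ d p j + d p m <= d p x + d p y.
Proof.
  enough (H : forall n m x y, m ≼[p] x -> m ≼[p] y -> x ≼[p] q -> y ≼[p] q ->
            (d p x - d p m) + (d p y - d p m) <= n ->
            exists j, join_in p q x y j /\ d p j + d p m <= d p x + d p y)
    by (intros; eapply H; eauto).
  intro n; induction n as [n IH] using lt_wf_ind.
  intros m' x' y' Hmx Hmy Hxq Hyq Hn.
  destruct (classic (x' = m')) as [->|Nxm].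
  { exists y'. repeat split; auto using bp_le_refl; lia. }
  destruct (classic (y' = m')) as [->|Nym].
  { exists x'. repeat split; auto using bp_le_refl; lia. }
  pose proof (bp_le_rank_lt _ _ _ Hmx (not_eq_sym Nxm)).
  pose proof (bp_le_rank_lt _ _ _ Hmy (not_eq_sym Nym)).
  destruct (bp_le_step_up p m' x' Hmx (not_eq_sym Nxm)) as [x1 [_ [Hmx1 [Hx1x Rx1]]]].
  destruct (bp_le_step_up p m' y' Hmy (not_eq_sym Nym)) as [y1 [_ [Hmy1 [Hy1y Ry1]]]].
  destruct (classic (x1 = y1)) as [<-|N1].
  { destruct (IH (n - 2) ltac:(lia) x1 x' y' Hx1x Hy1y Hxq Hyq ltac:(lia)) as [j [Hj Rj]].
    exists j; split; auto; lia. }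
  assert (Hx1q : x1 ≼[p] q) by (eapply bp_le_trans; eauto).
  assert (Hy1q : y1 ≼[p] q) by (eapply bp_le_trans; eauto).
  destruct (upper_covers_join p q m' x1 y1 (conj Hmx1 Rx1) (conj Hmy1 Ry1) N1 Hx1q Hy1q)
    as [z [Rz [Hzq [Hx1z [Hy1z Lz]]]]].
  destruct (IH (d p x' - d p x1 + (d p z - d p x1)) ltac:(lia) x1 x' z Hx1x Hx1z Hxq Hzq ltac:(lia))
    as [j1 [[Hj1q [Hxj1 [Hzj1 Lj1]]] Rj1]].
  assert (Hy1j1 : y1 ≼[p] j1) by (eapply bp_le_trans; eauto).
  pose proof (bp_le_rank _ _ _ Hy1y).
  destruct (IH (d p j1 - d p y1 + (d p y' - d p y1)) ltac:(lia) y1 j1 y' Hy1j1 Hy1y Hj1q Hyq ltac:(lia))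
    as [j [[Hjq [Hj1j [Hyj Lj]]] Rj]].
  exists j. split; [|lia].
  repeat split; auto.
  - exact (bp_le_trans _ _ _ _ Hxj1 Hj1j).
  - intros u Hu Hxu Hyu. apply Lj; auto. apply Lj1; auto. apply Lz; auto.
    + exact (bp_le_trans _ _ _ _ Hx1x Hxu).
    + exact (bp_le_trans _ _ _ _ Hy1y Hyu).
Qed.

Lemma common_lower_bound_rank_ge p j x y : x ≼[p] j -> y ≼[p] j ->
  exists c, c ≼[p] x /\ c ≼[p] y /\ d p x + d p y <= d p c + d p j.
Proof.
  enough (H : forall n j x y, x ≼[p] j -> y ≼[p] j -> (d p j - d p x) + (d p j - d p y) <= n ->
            exists c, c ≼[p] x /\ c ≼[p] y /\ d p x + d p y <= d p c + d p j)
    by (intros; eapply H; eauto).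
  intro n; induction n as [n IH] using lt_wf_ind.
  intros j' x' y' Hxj Hyj Hn.
  destruct (classic (x' = j')) as [->|Nxj].
  { exists y'. repeat split; auto using bp_le_refl; lia. }
  destruct (classic (y' = j')) as [->|Nyj].
  { exists x'. repeat split; auto using bp_le_refl; lia. }
  pose proof (bp_le_rank_lt _ _ _ Hxj Nxj).
  pose proof (bp_le_rank_lt _ _ _ Hyj Nyj).
  destruct (bp_le_step_down p x' j' Hxj Nxj) as [x1 [_ [Hxx1 [Hx1j Rx1]]]].
  destruct (bp_le_step_down p y' j' Hyj Nyj) as [y1 [_ [Hyy1 [Hy1j Ry1]]]].
  pose proof (bp_le_rank _ _ _ Hxx1). pose proof (bp_le_rank _ _ _ Hyy1).
  destruct (classic (x1 = y1)) as [<-|N1].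
  { destruct (IH (n - 2) ltac:(lia) x1 x' y' Hxx1 Hyy1 ltac:(lia)) as [c [Hcx [Hcy Rc]]].
    exists c; repeat split; auto; lia. }
  destruct (lower_covers_common_lower_cover p x1 y1 j' (conj Hx1j Rx1) (conj Hy1j Ry1) N1)
    as [z [[Hzx1 Rz1] [Hzy1 Rz2]]].
  destruct (IH (d p x1 - d p x' + (d p x1 - d p z)) ltac:(lia) x1 x' z Hxx1 Hzx1 ltac:(lia))
    as [m1 [Hm1x [Hm1z Rm1]]].
  pose proof (bp_le_trans _ _ _ _ Hm1z Hzy1) as Hm1y1.
  pose proof (bp_le_rank _ _ _ Hm1z).
  destruct (IH (d p y1 - d p m1 + (d p y1 - d p y')) ltac:(lia) y1 m1 y' Hm1y1 Hyy1 ltac:(lia))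
    as [c [Hcm1 [Hcy Rc]]].
  exists c; repeat split; auto; [|lia].
  exact (bp_le_trans _ _ _ _ Hcm1 Hm1x).
Qed.

Lemma interval_join_exists p q x y : x ≼[p] q -> y ≼[p] q ->
  exists j, join_in p q x y j /\ d p j <= d p x + d p y.
Proof.
  intros Hx Hy.
  destruct (join_in_rank_le p q p x y (bp_le_base p x) (bp_le_base p y) Hx Hy) as [j [Hj Rj]].
  rewrite dist_refl in Rj. eauto with arith.
Qed.

Lemma join_in_unique p q x y j j' : join_in p q x y j -> join_in p q x y j' -> j = j'.
Proof. intros [Sj [Hxj [Hyj Lj]]] [Sj' [Hxj' [Hyj' Lj']]]. apply (bp_le_antisym p); auto. Qed.

(* The meet is a common lower bound of maximal rank: joining it with any other common lower
   bound gives a common lower bound of no smaller rank. *)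
Lemma interval_meet_exists p q x y : x ≼[p] q -> y ≼[p] q -> exists m, meet_in p q x y m.
Proof.
  intros Hx Hy.
  destruct (nat_bounded_greatest_witness (fun k => exists c, c ≼[p] x /\ c ≼[p] y /\ d p c = k) (d p x))
    as [k [[c [Hcx [Hcy Hck]]] Hmax]].
  - exists 0, p. repeat split; try apply bp_le_base. apply dist_refl.
  - intros k [c [Hcx [_ <-]]]. apply bp_le_rank; auto.
  - assert (Hcq : c ≼[p] q) by (eapply bp_le_trans; eauto).
    exists c; repeat split; auto. intros c' Hc'q H1 H2.
    destruct (interval_join_exists p q c c' Hcq Hc'q) as [j [[_ [Hcj [Hc'j Lj]]] _]].
    assert (Hjx : j ≼[p] x) by (apply Lj; auto).
    assert (Hjy : j ≼[p] y) by (apply Lj; auto).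
    assert (d p j <= k) by (apply Hmax; eauto).
    pose proof (bp_le_rank _ _ _ Hcj).
    assert (c = j) by (apply (bp_le_rank_eq p); auto; lia).
    subst; auto.
Qed.

Lemma interval_rank_modular p q x y m j : x ≼[p] q -> y ≼[p] q ->
  meet_in p q x y m -> join_in p q x y j -> d p j + d p m = d p x + d p y.
Proof.
  intros Hx Hy Hm Hj. pose proof Hm as [_ [Hmx [Hmy Lm]]].
  destruct (join_in_rank_le p q m x y Hmx Hmy Hx Hy) as [j0 [Hj0 Rj0]].
  rewrite (join_in_unique _ _ _ _ _ _ Hj0 Hj) in Rj0.
  pose proof Hj as [_ [Hxj [Hyj _]]].
  destruct (common_lower_bound_rank_ge p j x y Hxj Hyj) as [c [Hcx [Hcy Rc]]].
  pose proof (bp_le_rank _ _ _ (Lm c (bp_le_trans _ _ _ _ Hcx Hx) Hcx Hcy)). lia.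
Qed.

Definition meet_at_base p x y := forall c, c ≼[p] x -> c ≼[p] y -> c = p.

Definition interval_additive p q := forall x y, x ≼[p] q -> y ≼[p] q -> meet_at_base p x y ->
  d x y = d p x + d p y.

Section AdditivityStep.
Variables p q x y : V.
Hypothesis IH : forall p' q', d p' q' < d p q -> interval_additive p' q'.
Hypotheses (Hxq : x ≼[p] q) (Hyq : y ≼[p] q) (Hxy : meet_at_base p x y).
Hypothesis rank_q : d p q = d p x + d p y.
Hypotheses (rank_x : 1 <= d p x) (rank_y : 2 <= d p y).

Lemma additive_below_rank x' y' : x' ≼[p] q -> y' ≼[p] q -> meet_at_base p x' y' ->
  d p x' + d p y' < d p q -> d x' y' = d p x' + d p y'.
Proof.
  intros Hx' Hy' M Lt.
  destruct (interval_join_exists p q x' y' Hx' Hy') as [j [[_ [Hxj [Hyj _]]] Rj]].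
  apply (IH p j); auto. lia.
Qed.

Lemma lower_neighbour_additive : exists x1, adj x1 x /\ x1 ≼[p] x /\ d p x = S (d p x1) /\
  d x1 y = d p x1 + d p y.
Proof.
  assert (Npx : p <> x) by (apply neq_of_dist_neq with p; rewrite dist_refl; lia).
  destruct (bp_le_step_down p p x (bp_le_base p x) Npx) as [x1 [Ax1 [_ [Hx1x Rx1]]]].
  exists x1; repeat split; auto.
  apply additive_below_rank; [exact (bp_le_trans _ _ _ _ Hx1x Hxq)|auto| |lia].
  intros c Hcx1 Hcy. apply Hxy; auto. exact (bp_le_trans _ _ _ _ Hcx1 Hx1x).
Qed.

(* The meet c of x and p in (I(y,x1), ≼y) is a common ≼p-lower bound of x and y, hence c = p,
   which contradicts modularity of the rank d(y,-). *)
Lemma no_gap_two x1 : adj x1 x -> x1 ≼[p] x -> d p x = S (d p x1) -> d x1 y = d p x1 + d p y ->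
  d x y <> d p x + d p y - 2.
Proof.
  intros Ax1 Hx1x Rx1 Dx1y Gap.
  pose proof (dist_adj _ _ (adj_sym _ _ Ax1)) as Dxx1.
  pose proof (dist_sym y x). pose proof (dist_sym y x1). pose proof (dist_sym y p).
  assert (Hx : x ≼[y] x1) by (unfold_bp; lia).
  assert (Hp : p ≼[y] x1) by (unfold_bp; lia).
  destruct (interval_meet_exists y x1 x p Hx Hp) as [c Hc].
  destruct (interval_join_exists y x1 x p Hx Hp) as [j [Hj _]].
  pose proof (interval_rank_modular y x1 x p c j Hx Hp Hc Hj) as Rmod.
  destruct Hc as [_ [Hcx [Hcp _]]], Hj as [Hjx1 [Hxj [Hpj _]]].
  assert (Nxj : x <> j) by (intros <-; unfold_bp; lia).
  pose proof (bp_le_rank_lt _ _ _ Hxj Nxj). pose proof (bp_le_rank _ _ _ Hjx1).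
  pose proof (dist_sym p c). pose proof (dist_sym c y).
  assert (c = p) as -> by (apply Hxy; unfold_bp; lia).
  unfold_bp. lia.
Qed.

(* With t the common neighbour of x1, x towards y, the join g of t and p in I(x1,y) lies in I(p,y)
   at distance 1 from p, yet is at distance at most d(p,x) from x. *)
Lemma no_gap_one x1 : adj x1 x -> x1 ≼[p] x -> d p x = S (d p x1) -> d x1 y = d p x1 + d p y ->
  d x y <> d p x + d p y - 1.
Proof.
  intros Ax1 Hx1x Rx1 Dx1y Gap.
  pose proof (dist_sym y x). pose proof (dist_sym y x1). pose proof (dist_sym x1 p).
  destruct (triangle y x1 x Ax1) as [t [At1 [Atx Rt]]]; [lia|lia|].
  pose proof (dist_adj _ _ (adj_sym _ _ At1)) as Dx1t. pose proof (dist_sym y t).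
  assert (Ht : t ≼[x1] y) by (unfold_bp; lia).
  assert (Hp : p ≼[x1] y) by (unfold_bp; lia).
  destruct (interval_meet_exists x1 y t p Ht Hp) as [m Hm].
  destruct (interval_join_exists x1 y t p Ht Hp) as [g [Hg _]].
  pose proof (interval_rank_modular x1 y t p m g Ht Hp Hm Hg) as Rmod.
  destruct Hm as [_ [Hmt [Hmp _]]], Hg as [Hgy [Htg [Hpg _]]].
  assert (Dpt : d p t >= d p x - 1) by (pose proof (dist_adj_le p _ _ (adj_sym _ _ Atx)); lia).
  assert (Rm : d x1 m = 0).
  { pose proof (bp_le_rank _ _ _ Hmt).
    destruct (Nat.eq_dec (d x1 m) 0) as [|Nm]; auto.
    assert (m = t) as -> by (apply (bp_le_rank_eq x1); auto; lia).
    pose proof (dist_sym t p). unfold_bp. lia. }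
  pose proof (bp_le_dist _ _ _ Hx1x).
  assert (Hgy' : g ≼[p] y) by (unfold_bp; lia).
  assert (Mxg : meet_at_base p x g).
  { intros c Hcx Hcg. apply Hxy; auto. exact (bp_le_trans _ _ _ _ Hcg Hgy'). }
  assert (Dxg : d x g = d p x + d p g).
  { apply additive_below_rank; auto; [exact (bp_le_trans _ _ _ _ Hgy' Hyq)|unfold_bp; lia]. }
  pose proof (dist_triangle x t g). rewrite (dist_sym x t), (dist_adj _ _ Atx) in *.
  unfold_bp. lia.
Qed.

Lemma additive_step : d x y = d p x + d p y.
Proof.
  destruct lower_neighbour_additive as [x1 [Ax1 [Hx1x [Rx1 Dx1y]]]].
  pose proof (no_gap_two x1 Ax1 Hx1x Rx1 Dx1y). pose proof (no_gap_one x1 Ax1 Hx1x Rx1 Dx1y).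
  pose proof (dist_triangle x1 x y). pose proof (dist_triangle x p y).
  rewrite (dist_sym x1 x), (dist_adj _ _ (adj_sym _ _ Ax1)), (dist_sym x p) in *.
  lia.
Qed.

End AdditivityStep.

Lemma additive_of_rank p q x y : (forall p' q', d p' q' < d p q -> interval_additive p' q') ->
  x ≼[p] q -> y ≼[p] q -> meet_at_base p x y -> d p q = d p x + d p y -> d x y = d p x + d p y.
Proof.
  intros IH Hx Hy M Dq.
  destruct (d p x) as [|[|a]] eqn:Ea.
  { apply dist_eq0 in Ea as <-. reflexivity. }
  all: destruct (d p y) as [|[|b]] eqn:Eb.
  1, 4: apply dist_eq0 in Eb as <-; rewrite dist_sym; lia.
  - pose proof (dist_triangle x p y). rewrite (dist_sym x p) in *.
    destruct (d x y) as [|[|[|k]]] eqn:E; try lia.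
    + apply dist_eq0 in E as <-. pose proof (M x (bp_le_refl _ _) (bp_le_refl _ _)) as ->.
      rewrite dist_refl in Ea; discriminate.
    + exfalso. apply (edge_below_rank_neq p q x y Hx Hy); [apply adj_dist1; auto|lia].
  - rewrite <- Ea, <- Eb. apply (additive_step p q); auto; lia.
  - rewrite dist_sym, <- Ea, <- Eb, Nat.add_comm.
    apply (additive_step p q); auto; try lia. intros c Hcy Hcx; apply M; auto.
  - rewrite <- Ea, <- Eb. apply (additive_step p q); auto; lia.
Qed.

Lemma interval_additive_all p q : interval_additive p q.
Proof.
  remember (d p q) as D eqn:HD. revert p q HD.
  induction D as [D IH] using lt_wf_ind. intros p q -> x y Hx Hy M.
  assert (IHq : forall p' q', d p' q' < d p q -> interval_additive p' q')
    by (intros p' q' Lt; exact (IH _ Lt p' q' eq_refl)).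
  destruct (interval_join_exists p q x y Hx Hy) as [j [[Hjq [Hxj [Hyj _]]] Rj]].
  destruct (classic (j = q)) as [->|Nj].
  - destruct (common_lower_bound_rank_ge p q x y Hx Hy) as [c [Hcx [Hcy Rc]]].
    rewrite (M c Hcx Hcy), dist_refl in Rc.
    apply (additive_of_rank p q); auto; lia.
  - apply (IHq p j); auto. apply bp_le_rank_lt; auto.
Qed.

Lemma interval_lattice p q : is_lattice (interval adj p q) (bp_le adj p).
Proof.
  split; [split; [|split]|].
  - intros x _; apply bp_le_refl.
  - intros x y _ _; apply bp_le_antisym.
  - intros x y z _ _ _; apply bp_le_trans.
  - intros x y Hx Hy. split.
    + destruct (interval_join_exists p q x y Hx Hy) as [j [Hj _]]; eauto.
    + apply interval_meet_exists; auto.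
Qed.

(* b <= e always holds; equality follows since the rank d(p,-) of both sides agrees,
   by modularity of the rank applied to the four meet/join pairs involved. *)
Lemma interval_modular_lattice p q : is_modular_lattice (interval adj p q) (bp_le adj p).
Proof.
  split; [apply interval_lattice|].
  intros x y z Hx Hy Hz Hxz a b c e Ha Hb Hc He.
  pose proof Ha as [Sa [Hay [Haz La]]].
  pose proof Hb as [Sb [Hxb [Hab Lb]]].
  pose proof Hc as [Sc [Hxc [Hyc Lc]]].
  pose proof He as [Se [Hec [Hez Le]]].
  assert (Hbe : b ≼[p] e).
  { apply Le; [exact Sb| |].
    - apply Lb; [exact Sc|exact Hxc|exact (bp_le_trans _ _ _ _ Hay Hyc)].
    - apply Lb; [exact Hz|exact Hxz|exact Haz]. }
  destruct (interval_meet_exists p q x y Hx Hy) as [m Hm].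
  destruct (interval_join_exists p q y z Hy Hz) as [j [Hj _]].
  assert (Hm' : meet_in p q x a m).
  { destruct Hm as [Sm [Hmx [Hmy Lm]]]. repeat split; auto.
    - apply La; auto. exact (bp_le_trans _ _ _ _ Hmx Hxz).
    - intros u Su Hux Hua. apply Lm; auto. exact (bp_le_trans _ _ _ _ Hua Hay). }
  assert (Hj' : join_in p q c z j).
  { destruct Hj as [Sj [Hyj [Hzj Lj]]]. repeat split; auto.
    - apply Lc; auto. exact (bp_le_trans _ _ _ _ Hxz Hzj).
    - intros u Su Hcu Hzu. apply Lj; auto. exact (bp_le_trans _ _ _ _ Hyc Hcu). }
  pose proof (interval_rank_modular p q x a m b Hx Sa Hm' Hb).
  pose proof (interval_rank_modular p q y z a j Hy Hz Ha Hj).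
  pose proof (interval_rank_modular p q x y m c Hx Hy Hm Hc).
  pose proof (interval_rank_modular p q c z e j Sc Hz He Hj').
  apply (bp_le_rank_eq p); auto. lia.
Qed.

Lemma interval_covering_graph p q : is_covering_graph_on adj (interval adj p q) (bp_le adj p).
Proof.
  assert (Cov : forall a b, a ≼[p] q -> b ≼[p] q -> adj a b -> d p b = S (d p a) ->
            covers (interval adj p q) (bp_le adj p) a b).
  { intros a b Ha Hb Aab Rab. assert (Hab : a ≼[p] b) by (unfold_bp; rewrite (dist_adj _ _ Aab); lia).
    repeat split; auto.
    - intros <-; eapply adj_irrefl; eauto.
    - intros z _ Haz Hzb. pose proof (bp_le_rank _ _ _ Haz). pose proof (bp_le_rank _ _ _ Hzb).
      destruct (Nat.eq_dec (d p z) (d p a)).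
      + left. symmetry. apply (bp_le_rank_eq p); auto.
      + right. apply (bp_le_rank_eq p); auto. lia. }
  assert (Cov_adj : forall a b, covers (interval adj p q) (bp_le adj p) a b -> adj a b).
  { intros a b [Ha [Hb [Hab [Nab Lab]]]].
    destruct (bp_le_step_up p a b Hab Nab) as [w [Aw [Haw [Hwb _]]]].
    destruct (Lab w (bp_le_trans _ _ _ _ Hwb Hb) Haw Hwb) as [<- | ->]; auto.
    exfalso; eapply adj_irrefl; eauto. }
  intros x y Hx Hy. split.
  - intros A. pose proof (dist_adj_le p _ _ A). pose proof (dist_adj_le p _ _ (adj_sym _ _ A)).
    pose proof (edge_below_rank_neq p q x y Hx Hy A).
    destruct (Nat.eq_dec (d p y) (S (d p x))); [left|right]; apply Cov; auto; lia.
  - intros [C|C]; [|apply adj_sym]; apply Cov_adj; auto.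
Qed.

(* Rebasing at the meet m of x and y, the geodesics m -> x and m -> y stay inside I(p,q). *)
Lemma interval_isometric p q : isometric_on adj (interval adj p q).
Proof.
  intros x y Hx Hy.
  destruct (interval_meet_exists p q x y Hx Hy) as [m [_ [Hmx [Hmy Lm]]]].
  assert (Mm : meet_at_base m x y).
  { intros c Hcx Hcy. destruct (bp_le_rebase p m c x Hmx Hcx) as [Hmc Hcx'].
    destruct (bp_le_rebase p m c y Hmy Hcy) as [_ Hcy'].
    apply (bp_le_antisym p); auto. apply Lm; auto. exact (bp_le_trans _ _ _ _ Hcx' Hx). }
  pose proof (interval_additive_all m q x y (bp_le_rebase_interval _ _ _ _ Hmx Hx)
                (bp_le_rebase_interval _ _ _ _ Hmy Hy) Mm) as Dxy.
  split.
  - rewrite Dxy. apply walk_app with m.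
    + apply walk_rev; [intros a b [Ha [Hb Ab]]; repeat split; auto|].
      apply (geodesic_walk_in_interval p q); auto.
    + apply (geodesic_walk_in_interval p q); auto.
  - intros k W. apply dist_le_walk. eapply walk_mono; [|exact W]. intros a b [_ [_ Ab]]; auto.
Qed.

End SwmIntervals.

Section Converse.
Hypothesis interval_lattices : forall p q : V,
  is_modular_lattice (interval adj p q) (bp_le adj p) /\
  is_covering_graph_on adj (interval adj p q) (bp_le adj p) /\
  isometric_on adj (interval adj p q).

(* The edge a - b of a K4^- lies in I(c,e) between two vertices at the same distance from c,
   so it is not a covering edge. *)
Lemma no_induced_K4minus : ~ has_induced_K4minus adj.
Proof.
  intros [a [b [c [e [Nab [Nac [Nae [Nbc [Nbe [Nce [Aab [Aac [Aae [Abc [Abe Nce']]]]]]]]]]]]]]].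
  assert (Dce : d c e = 2).
  { assert (d c e <= 2).
    { apply dist_le_walk. apply walkS with a; [apply adj_sym; auto|].
      apply walkS with e; [auto|constructor]. }
    destruct (d c e) as [|[|[|k]]] eqn:E; try lia.
    - exfalso; apply Nce, dist_eq0; auto.
    - exfalso; apply Nce', adj_dist1; auto. }
  pose proof (dist_adj _ _ (adj_sym _ _ Aac)). pose proof (dist_adj _ _ (adj_sym _ _ Abc)).
  pose proof (dist_adj _ _ Aae). pose proof (dist_adj _ _ Abe). pose proof (dist_adj _ _ Aab).
  destruct (interval_lattices c e) as [_ [Hcov _]].
  assert (Sa : interval adj c e a) by (unfold interval; lia).
  assert (Sb : interval adj c e b) by (unfold interval; lia).
  pose proof (dist_sym b a).
  destruct (proj1 (Hcov a b Sa Sb) Aab) as [[_ [_ [Hle _]]]|[_ [_ [Hle _]]]]; unfold_bp; lia.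
Qed.

(* In I(a3,b3) the join of b1 and b2 would lie below both a1 and a2. *)
Lemma no_isometric_K33minus : ~ has_isometric_K33minus adj.
Proof.
  intros [a1 [a2 [a3 [b1 [b2 [b3 [D12 [D13 [D23 [E12 [E13 [E23 [F11 [F12 [F13 [F21 [F22 [F23
    [F31 [F32 F33]]]]]]]]]]]]]]]]]]]].
  destruct (interval_lattices a3 b3) as [[[_ Hex] _] _].
  pose proof (dist_sym a3 a1). pose proof (dist_sym a3 a2).
  pose proof (dist_sym b1 a1). pose proof (dist_sym b2 a1).
  pose proof (dist_sym b1 a2). pose proof (dist_sym b2 a2). pose proof (dist_sym b2 b1).
  assert (Sb1 : interval adj a3 b3 b1) by (unfold interval; lia).
  assert (Sb2 : interval adj a3 b3 b2) by (unfold interval; lia).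
  destruct (Hex b1 b2 Sb1 Sb2) as [[j [Sj [Hb1j [Hb2j Lj]]]] _].
  assert (Ha1 : j ≼[a3] a1) by (apply Lj; unfold_bp; lia).
  assert (Ha2 : j ≼[a3] a2) by (apply Lj; unfold_bp; lia).
  unfold_bp.
  destruct (Nat.eq_dec (d b1 j) 0) as [E|E].
  - apply dist_eq0 in E as <-. lia.
  - assert (Ej1 : d j a1 = 0) by lia. assert (Ej2 : d j a2 = 0) by lia.
    apply dist_eq0 in Ej1 as <-. apply dist_eq0 in Ej2 as <-. rewrite dist_refl in D12. discriminate.
Qed.

(* Otherwise a neighbour y of v towards m satisfies y ∨ (w ∧ v) = y, so modularity gives
   (y ∨ w) ∧ v = y; but y ∨ w = z by rank, so (y ∨ w) ∧ v = v. *)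
Lemma quadrangle_meet_adjacent u z v w m : d u z = S (d u v) -> d u v = d u w -> d v w = 2 ->
  v ≼[u] z -> w ≼[u] z -> meet_in u z v w m -> d m v = 1.
Proof.
  intros Dz Dvw D2 Sv Sw Hm.
  destruct (interval_lattices u z) as [[[_ Hex] Hmod] _].
  pose proof Hm as [Sm [Hmv [Hmw Lm]]].
  assert (Nmv : m <> v) by (intros ->; unfold_bp; lia).
  destruct (d v m) as [|[|n]] eqn:E.
  - exfalso; apply Nmv, eq_sym, dist_eq0; auto.
  - rewrite dist_sym; auto.
  - exfalso. destruct (dist_succ_step _ _ _ E) as [y [Ay Dy]].
    assert (B : d m y + d y v = d m v).
    { rewrite (dist_sym m y), (dist_sym y v), (dist_sym m v), (dist_adj _ _ Ay); lia. }
    destruct (bp_le_geodesic u m y v Hmv B) as [Hmy Hyv].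
    assert (Nym : y <> m) by (apply (neq_of_dist_neq m); rewrite dist_refl, dist_sym; lia).
    assert (Sy : y ≼[u] z) by exact (bp_le_trans _ _ _ _ Hyv Sv).
    destruct (Hex y w Sy Sw) as [[c Hc] _].
    pose proof Hc as [Sc [Hyc [Hwc Lc]]].
    destruct (Hex c v Sc Sv) as [_ [e He]].
    pose proof He as [Se [Hec [Hev Le]]].
    assert (Hm' : meet_in u z w v m) by (repeat split; auto).
    assert (Hb : join_in u z y m y) by (repeat split; auto using bp_le_refl).
    pose proof (Hmod y w v Sy Sw Sv Hyv m y c e Hm' Hb Hc He) as <-.
    assert (Hcz : c ≼[u] z) by exact (Lc z (bp_le_refl u z) Sy Sw).
    assert (Nwc : w <> c).
    { intros <-. apply Nym. apply (bp_le_antisym u); auto. }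
    pose proof (bp_le_rank_lt _ _ _ Hwc Nwc). pose proof (bp_le_rank _ _ _ Hcz).
    assert (c = z) as -> by (apply (bp_le_rank_eq u); auto; lia).
    assert (y = v) as -> by exact (bp_le_antisym u y v Hyv (Le v Sv Sv (bp_le_refl u v))).
    eapply adj_irrefl; eauto.
Qed.

Lemma quadrangle_cond_of_intervals u : quadrangle_cond adj u.
Proof.
  intros v w z Avz Awz D2 H2 Dvw Dz.
  assert (Sv : v ≼[u] z) by (unfold_bp; rewrite (dist_adj _ _ Avz); lia).
  assert (Sw : w ≼[u] z) by (unfold_bp; rewrite (dist_adj _ _ Awz); lia).
  destruct (interval_lattices u z) as [[[_ Hex] _] _].
  destruct (Hex v w Sv Sw) as [_ [m Hm]].
  pose proof (quadrangle_meet_adjacent u z v w m ltac:(lia) Dvw D2 Sv Sw Hm) as Dmv.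
  assert (Hm' : meet_in u z w v m) by (destruct Hm as [? [? [? ?]]]; repeat split; auto).
  pose proof (quadrangle_meet_adjacent u z w v m ltac:(lia) (eq_sym Dvw)
                ltac:(rewrite dist_sym; auto) Sw Sv Hm') as Dmw.
  exists m. split; [|split]; try (apply adj_dist1; auto).
  destruct Hm as [_ [Hmv _]]. unfold_bp. lia.
Qed.

End Converse.
End Graph.

Theorem theorem6p1 (V : Type) (adj : V -> V -> Prop)
  (hG : simple_connected_graph adj)
  (htri : forall u, triangle_cond adj u) :
  swm_graph adj <->
  (forall p q : V,
     is_modular_lattice (interval adj p q) (bp_le adj p) /\
     is_covering_graph_on adj (interval adj p q) (bp_le adj p) /\
     isometric_on adj (interval adj p q)).
Proof.
  destruct hG as [hsym [hirr hcon]].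
  split.
  - intros [wm [hK4 hK33]] p q.
    assert (hquad : forall u, quadrangle_cond adj u) by (intro u; apply (wm u)).
    repeat split.
    all: first [ apply interval_modular_lattice | apply interval_covering_graph
               | apply interval_isometric ]; auto.
  - intros Hint. repeat split; auto.
    + apply quadrangle_cond_of_intervals; auto.
    + apply no_induced_K4minus; auto.
    + apply no_isometric_K33minus; auto.
Qed.
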